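(* If $G$ is a graph with minimum degree $\delta=\delta(G)\ge 2$ and maximum degree $\Delta=\Delta(G)\ge 4\lfloor\delta/2\rfloor-2$, then $$\mathrm{TC}_2(G)\le \Big\lfloor\tfrac{\delta}{2}\Big\rfloor\Big(\Delta-2\Big\lfloor\tfrac{\delta}{2}\Big\rfloor+1\Big)+\Big\lceil\tfrac{\delta}{2}\Big\rceil.$$ Moreover, the bound is sharp for every even minimum degree: for every even $\delta\ge 2$ there exists a graph with minimum degree $\delta$ satisfying the hypothesis and attaining equality.
   Context: All graphs are finite, simple and connected. $N(v)$ denotes the open neighborhood of $v$. A set $S\subseteq V(G)$ is a total $2$-dominating set if $|N(v)\cap S|\ge 2$ for every $v\in V(G)$. Two disjoint sets $U,W\subseteq V(G)$ form a total $2$-coalition if neither is a total $2$-dominating set but $U\cup W$ is. A total $2$-coalition partition of $G$ is a partition $\Omega$ of $V(G)$ in which every set forms a total $2$-coalition with some other set of $\Omega$; $\mathrm{TC}_2(G)$ is the maximum cardinality of such a partition. *)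

From mathcomp Require Import all_boot.
Set Implicit Arguments. Unset Strict Implicit. Unset Printing Implicit Defensive.

Definition simple_graph (T : finType) (e : rel T) : Prop :=
  symmetric e /\ irreflexive e.

Definition connected_graph (T : finType) (e : rel T) : Prop :=
  forall x y : T, connect e x y.

Definition nbhd (T : finType) (e : rel T) (v : T) : {set T} := [set u | e v u].
Definition deg (T : finType) (e : rel T) (v : T) : nat := #|nbhd e v|.

Definition is_min_degree (T : finType) (e : rel T) (d : nat) : Prop :=
  (exists v, deg e v = d) /\ (forall v, d <= deg e v).
Definition is_max_degree (T : finType) (e : rel T) (d : nat) : Prop :=
  (exists v, deg e v = d) /\ (forall v, deg e v <= d).

Definition total2dom (T : finType) (e : rel T) (S : {set T}) : bool :=
  [forall v, 2 <= #|nbhd e v :&: S|].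

Definition total2coalition (T : finType) (e : rel T) (U W : {set T}) : bool :=
  [&& [disjoint U & W], ~~ total2dom e U, ~~ total2dom e W & total2dom e (U :|: W)].

Definition tc2_partition (T : finType) (e : rel T) (P : {set {set T}}) : bool :=
  partition P [set: T] &&
  [forall U in P, exists W in P, total2coalition e U W].

Definition TC2 (T : finType) (e : rel T) : nat :=
  \max_(P : {set {set T}} | tc2_partition e P) #|P|.

From mathcomp Require Import all_boot zify.
Set Implicit Arguments. Unset Strict Implicit. Unset Printing Implicit Defensive.

(* Fix a vertex v of minimum degree δ and a total 2-coalition
   partition P.  A class missing N(v) can only form a coalition with a class
   meeting N(v) at least twice, and at most ⌊δ/2⌋ classes do; counting classes
   by their intersection with N(v) gives |P| <= δ + b - h, where b is the number
   of classes missing N(v) and h the number of their partners.  A partner W is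
   not total 2-dominating, so some u_W has at most one neighbour in W.  Then
   N(u_W) meets each partner together with one chosen class missing N(v) at
   least twice, and each other class Y missing N(v) is met by N(u_(partner Y));
   summing deg(u_W) <= Δ over the h partners gives 2h² + b - h <= hΔ.  Hence
   |P| <= δ + hΔ - 2h², which increases with h <= ⌊δ/2⌋ when Δ >= 4⌊δ/2⌋ - 2.

   Sharpness, δ = 2k.  Take vertices y_(j,t) (j < k, t < m), x_(i,j,s)
   (i, j < k, s < 2) and a clique of vertices f_(l,p) (l < k, p < 3), with
   y_(j,t) ~ x_(i,j,s), x_(i,j,s) ~ f_(l,0) and x_(i,j,s) ~ f_(l,1) for l <> j.
   The classes W_i = {x_(i,_,_), f_(i,_)} and the singletons {y_(j,t)} form a
   total 2-coalition partition of size k + km, as W_i ∪ {y_(i,t)} is total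
   2-dominating.  For m = 2k² + 3k the y's have the minimum degree 2k and the
   x's the maximum degree m + 2k - 1, so k + km is the bound. *)

Lemma partition_sum_cardI (T : finType) (P : {set {set T}}) (S : {set T}) :
  partition P [set: T] -> \sum_(X in P) #|X :&: S| = #|S|.
Proof.
move=> partP; have cardI X : #|X :&: S| = \sum_(x in X) (x \in S).
  rewrite -sum1_card big_mkcond [RHS]big_mkcond; apply: eq_bigr => x _.
  by rewrite inE; case: (x \in X).
rewrite -[in RHS](setTI S) cardI (set_partition_big _ partP).
by apply: eq_bigr => X _; rewrite cardI.
Qed.

Definition deg_in (T : finType) (e : rel T) (X : {set T}) (u : T) : nat :=
  #|X :&: nbhd e u|.

Lemma sum_deg_in_partition (T : finType) (e : rel T) (P A : {set {set T}}) (u : T) :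
  partition P [set: T] -> A \subset P -> \sum_(X in A) deg_in e X u <= deg e u.
Proof.
move=> partP AP; rewrite /deg -(partition_sum_cardI _ partP) [leqRHS](big_setID A) /=.
by rewrite (setIidPr AP) leq_addr.
Qed.

Lemma total2domP (T : finType) (e : rel T) (S : {set T}) :
  reflect (forall u, 2 <= deg_in e S u) (total2dom e S).
Proof.
by apply: (iffP forallP) => S2 u; [rewrite /deg_in setIC | rewrite setIC]; apply: S2.
Qed.

Lemma total2domPn (T : finType) (e : rel T) (S : {set T}) :
  reflect (exists u, deg_in e S u <= 1) (~~ total2dom e S).
Proof.
rewrite /deg_in; apply: (iffP forallPn) => -[u].
  by rewrite setIC -ltnNge ltnS; exists u.
by rewrite setIC => Su; exists u; rewrite -ltnNge ltnS.
Qed.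

Lemma deg_inU (T : finType) (e : rel T) (U W : {set T}) (u : T) :
  deg_in e (U :|: W) u <= deg_in e U u + deg_in e W u.
Proof. by rewrite /deg_in setIUl leq_card_setU. Qed.

Lemma total2coalition_deg_in (T : finType) (e : rel T) (U W : {set T}) (u : T) :
  total2coalition e U W -> 2 <= deg_in e U u + deg_in e W u.
Proof. by case/and4P=> _ _ _ /total2domP/(_ u)/leq_trans; apply; apply: deg_inU. Qed.

Lemma total2coalition_sym (T : finType) (e : rel T) (U W : {set T}) :
  total2coalition e U W -> total2coalition e W U.
Proof. by case/and4P=> *; apply/and4P; rewrite disjoint_sym setUC. Qed.

Section UpperBound.

Variables (T : finType) (e : rel T) (P : {set {set T}}) (v : T) (Delta : nat).
Hypotheses (tcP : tc2_partition e P) (maxD : forall u, deg e u <= Delta).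

Let partP : partition P [set: T]. Proof. by case/andP: tcP. Qed.

Definition far := [set X in P | deg_in e X v == 0].
Definition heavy := [set X in P | 2 <= deg_in e X v].

Lemma card_far_heavy : #|P| + #|heavy| <= deg e v + #|far|.
Proof.
rewrite /deg -(partition_sum_cardI _ partP) -sum1_card -!sum1dep_card.
rewrite !big_mkcondr -!big_split /=.
by apply: leq_sum => X _; rewrite /deg_in; case: #|_|=> [|[|n]].
Qed.

Lemma double_card_heavy : 2 * #|heavy| <= deg e v.
Proof.
rewrite /deg -(partition_sum_cardI _ partP) -sum1dep_card big_mkcondr big_distrr /=.
by apply: leq_sum => X _; rewrite /deg_in; case: #|_|=> [|[|n]].
Qed.

Lemma far_sub : far \subset P.
Proof. by apply/subsetP=> X; rewrite inE => /andP[]. Qed.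

Lemma heavy_sub : heavy \subset P.
Proof. by apply/subsetP=> X; rewrite inE => /andP[]. Qed.

Definition partner (Y : {set T}) : {set T} :=
  odflt set0 [pick W in P | total2coalition e Y W].

Lemma partnerP Y : Y \in P -> partner Y \in P /\ total2coalition e Y (partner Y).
Proof.
move=> YP; have /exists_inP[W WP cYW] := forall_inP (proj2 (andP tcP)) Y YP.
by rewrite /partner; case: pickP => [W' /andP[]|/(_ W)] //; rewrite WP cYW.
Qed.

Lemma partner_heavy Y : Y \in far -> partner Y \in heavy.
Proof.
rewrite inE => /andP[YP /eqP vY]; have [WP cYW] := partnerP YP.
by rewrite inE WP; have := total2coalition_deg_in v cYW; rewrite vY.
Qed.

Definition partners := partner @: far.

Lemma partners_sub_heavy : partners \subset heavy.
Proof. by apply/subsetP=> _ /imsetP[Y Yfar ->]; apply: partner_heavy. Qed.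

Lemma partners_far_disjoint : [disjoint partners & far].
Proof.
rewrite disjoints_subset; apply/subsetP=> X /(subsetP partners_sub_heavy).
by rewrite !inE => /andP[-> /=]; apply: contraTN => /eqP ->.
Qed.

Definition far_rep (Z : {set T}) : {set T} :=
  odflt set0 [pick Y in far | partner Y == Z].

Lemma far_repP Z : Z \in partners -> far_rep Z \in far /\ partner (far_rep Z) = Z.
Proof.
case/imsetP=> Y Yfar ->; rewrite /far_rep.
by case: pickP => [Y' /andP[? /eqP]|/(_ Y)] //; rewrite Yfar eqxx.
Qed.

Definition far_reps := far_rep @: partners.

Lemma far_reps_sub : far_reps \subset far.
Proof. by apply/subsetP=> _ /imsetP[Z /far_repP[Yfar _] ->]. Qed.

Lemma far_rep_inj : {in partners &, injective far_rep}.
Proof.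
by move=> Z1 Z2 /far_repP[_ partner1] /far_repP[_ partner2] eqZ; rewrite -partner1 -partner2 eqZ.
Qed.

Definition witness (W : {set T}) : T := odflt v [pick u | deg_in e W u <= 1].

Lemma witnessP W : ~~ total2dom e W -> deg_in e W (witness W) <= 1.
Proof.
case/total2domPn=> u Wu; rewrite /witness.
by case: pickP => [//|/(_ u)]; rewrite Wu.
Qed.

Lemma partner_witness Y : Y \in far -> 1 <= deg_in e Y (witness (partner Y)).
Proof.
move=> Yfar; have [_ cYW] := partnerP (subsetP far_sub Y Yfar).
have := total2coalition_deg_in (witness (partner Y)) cYW.
have /and4P[_ _ /witnessP] := cYW; lia.
Qed.

Lemma sum_deg_in_partners_far u :
  2 * #|partners| + \sum_(Y in far :\: far_reps) deg_in e Y u <= Delta.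
Proof.
apply: leq_trans (maxD u).
have sub : partners :|: far \subset P.
  by rewrite subUset far_sub (subset_trans partners_sub_heavy heavy_sub).
apply: leq_trans (sum_deg_in_partition e u partP sub).
rewrite [leqRHS](eq_bigl [predU partners & far]) => [|X]; last by rewrite inE.
rewrite bigU ?partners_far_disjoint //=.
rewrite [X in _ <= _ + X](big_setID far_reps) /= (setIidPr far_reps_sub).
rewrite [\sum_(i in far_reps) _]big_imset /=; last exact: far_rep_inj.
rewrite addnA leq_add2r -big_split /= mulnC -sum_nat_const.
apply: leq_sum => Z Zpart.
have [Yfar partnerY] := far_repP Zpart.
have [_] := partnerP (subsetP far_sub _ Yfar); rewrite partnerY addnC.
exact: total2coalition_deg_in.
Qed.

Lemma card_far_partners :
  2 * #|partners| * #|partners| + (#|far| - #|partners|) <= #|partners| * Delta.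
Proof.
have : \sum_(W in partners)
    (2 * #|partners| + \sum_(Y in far :\: far_reps) deg_in e Y (witness W))
    <= \sum_(W in partners) Delta.
  by apply: leq_sum => W _; apply: sum_deg_in_partners_far.
rewrite big_split !sum_nat_const /= exchange_big /= => /(leq_trans _); apply.
have <- : #|far :\: far_reps| = #|far| - #|partners|.
  by rewrite cardsD (setIidPr far_reps_sub) card_in_imset //; apply: far_rep_inj.
rewrite mulnC leq_add2l -sum1_card; apply: leq_sum => Y; rewrite inE => /andP[_ Yfar].
rewrite (bigD1 (partner Y)) ?imset_f //=.
exact: leq_trans (partner_witness Yfar) (leq_addr _ _).
Qed.

End UpperBound.

Lemma quadratic_le (h k D : nat) : h <= k -> 4 * k - 2 <= D ->
  h * D + 2 * k * k <= k * D + 2 * h * h.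
Proof.
move=> /subnKC <-; move: (k - h) => [|d] kD; first lia.
have [E ->] : exists E, D = E + 2 * d + (4 * h + 2).
  by exists (D - (2 * d + 4 * h + 2)); lia.
nia.
Qed.

Lemma card_tc2_partition_le (T : finType) (e : rel T) (P : {set {set T}})
    (delta Delta : nat) :
  tc2_partition e P -> is_min_degree e delta -> is_max_degree e Delta ->
  4 * delta./2 - 2 <= Delta ->
  #|P| <= delta./2 * (Delta - 2 * delta./2 + 1) + uphalf delta.
Proof.
move=> tcP [[v <-] _] [_ maxD] Delta_ge.
have := card_far_heavy v tcP; have := double_card_heavy v tcP.
have := card_far_partners v tcP maxD.
have h_le_H : #|partners e P v| <= #|heavy e P v|.
  exact: subset_leq_card (partners_sub_heavy v tcP).
have := odd_double_half (deg e v); rewrite uphalf_half -addnn.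
have : odd (deg e v) <= 1 by case: odd.
move=> odd_le1 deg_eq card_partners card_heavy card_P.
have h_le_k : #|partners e P v| <= (deg e v)./2 by lia.
have := quadratic_le h_le_k Delta_ge; nia.
Qed.

Lemma TC2_le (T : finType) (e : rel T) (delta Delta : nat) :
  is_min_degree e delta -> is_max_degree e Delta -> 4 * delta./2 - 2 <= Delta ->
  TC2 e <= delta./2 * (Delta - 2 * delta./2 + 1) + uphalf delta.
Proof.
move=> mindeg maxdeg Delta_ge; apply/bigmax_leqP=> P tcP.
exact: card_tc2_partition_le tcP mindeg maxdeg Delta_ge.
Qed.

(* [inl (j, t)] is y_(j,t), [inr (inl (i, j, s))] is x_(i,j,s) and
   [inr (inr (l, p))] is f_(l,p). *)
Definition sharp_vertex (k m : nat) : finType :=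
  ('I_k * 'I_m + ('I_k * 'I_k * bool + 'I_k * 'I_3))%type.

Definition sharp_adj (k m : nat) (x y : sharp_vertex k m) : bool :=
  let x_f j l (p : 'I_3) := (val p == 0) || (val p == 1) && (l != j) in
  match x, y with
  | inl (j, _), inr (inl (_, j', _))
  | inr (inl (_, j', _)), inl (j, _) => j' == j
  | inr (inl (_, j, _)), inr (inr (l, p))
  | inr (inr (l, p)), inr (inl (_, j, _)) => x_f j l p
  | inr (inr a), inr (inr b) => a != b
  | _, _ => false
  end.

Section Sharpness.

Variables k m : nat.
Local Notation V := (sharp_vertex k m).
Local Notation adj := (@sharp_adj k m).

Lemma sharp_adj_sym : symmetric adj.
Proof.
by move=> [[j t]|[[[i j] s]|[l p]]] [[j' t']|[[[i' j''] s']|[l' p']]] //=; rewrite eq_sym.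
Qed.

Lemma sharp_adj_irr : irreflexive adj.
Proof. by move=> [[j t]|[[[i j] s]|[l p]]] //=; rewrite eqxx. Qed.

Definition sharp_class (x : V) : 'I_k + 'I_k * 'I_m :=
  match x with
  | inl q => inr q
  | inr (inl (i, _, _)) | inr (inr (i, _)) => inl i
  end.

Definition sharp_block (q : 'I_k + 'I_k * 'I_m) : {set V} :=
  [set x | sharp_class x == q].

Definition sharp_partition : {set {set V}} := [set sharp_block q | q in predT].

Lemma sharp_block_nonempty q : exists x, sharp_class x = q.
Proof. by case: q => [i|q]; [exists (inr (inr (i, ord0))) | exists (inl q)]. Qed.

Lemma sharp_block_inj : injective sharp_block.
Proof.
move=> q1 q2 eq12; have [x xq1] := sharp_block_nonempty q1.
have : x \in sharp_block q2 by rewrite -eq12 inE xq1.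
by rewrite inE xq1 => /eqP.
Qed.

Lemma sharp_block_disjoint q1 q2 :
  q1 != q2 -> [disjoint sharp_block q1 & sharp_block q2].
Proof.
move=> neq12; rewrite -setI_eq0; apply/eqP/setP=> x; rewrite !inE.
by apply/negbTE/andP=> -[/eqP eq1 /eqP eq2]; rewrite -eq1 -eq2 eqxx in neq12.
Qed.

Lemma card_sharp_partition : #|sharp_partition| = k + k * m.
Proof.
by rewrite card_imset; [rewrite card_sum card_prod !card_ord | apply: sharp_block_inj].
Qed.

Lemma sharp_partitionP : partition sharp_partition [set: V].
Proof.
apply/and3P; split.
- apply/eqP/setP=> x; rewrite inE; apply/bigcupP.
  by exists (sharp_block (sharp_class x)); rewrite ?imset_f ?inE.
- apply/trivIsetP=> _ _ /imsetP[q1 _ ->] /imsetP[q2 _ ->] neq12.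
  by apply: sharp_block_disjoint; apply: contraNneq neq12 => ->.
- apply/imsetP=> -[q _ /esym/setP blockq]; have [x xq] := sharp_block_nonempty q.
  by have := blockq x; rewrite !inE xq eqxx.
Qed.

Lemma sharp_pair_total2dom i t :
  total2dom adj (sharp_block (inl i) :|: sharp_block (inr (i, t))).
Proof.
have one_lt3 : 1 < 3 by [].
apply/forallP=> x; apply/card_gt1P; rewrite /nbhd.
case: x => [[j t']|[[[i' j] s]|[l p]]].
- exists (inr (inl (i, j, false))), (inr (inl (i, j, true))).
  by rewrite !inE /= !eqxx; split=> //; apply/eqP=> -[].
- have [->|neq_ji] := eqVneq j i.
    by exists (inl (i, t)), (inr (inr (i, ord0))); rewrite !inE /= !eqxx.
  exists (inr (inr (i, ord0))), (inr (inr (i, Ordinal one_lt3))).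
  by rewrite !inE /= !eqxx (eq_sym i) neq_ji; split=> //; apply/eqP=> -[].
- have /card_gt1P[q1 [q2 [+ + neq12]]] : 1 < #|[set~ p]| by rewrite cardsC1 card_ord.
  rewrite !inE => neq1 neq2; exists (inr (inr (i, q1))), (inr (inr (i, q2))).
  rewrite !inE /= !eqxx !xpair_eqE !(eq_sym p) (negbTE neq1) (negbTE neq2) !andbF.
  by split=> //; apply/eqP=> -[eq12]; rewrite eq12 eqxx in neq12.
Qed.

Lemma sharp_block_not_total2dom q : ~~ total2dom adj (sharp_block q).
Proof.
apply/total2domPn; rewrite /deg_in /nbhd; case: q => [i|q].
- exists (inr (inl (i, i, false))).
  rewrite -[leqRHS](cards1 (inr (inr (i, ord0)) : V)); apply: subset_leq_card.
  apply/subsetP=> -[[j t]|[[[i' j] s]|[l p]]]; rewrite !inE ?andbF //=.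
  case/andP=> /eqP[->]; rewrite eqxx andbF orbF => /eqP p0.
  by apply/eqP; congr (inr (inr (_, _))); apply: val_inj.
- exists (inl q); case: q => j t; rewrite eq_card0 //.
  by move=> [[j' t']|[[[i j'] s]|[l p]]]; rewrite !inE /= ?andbF.
Qed.

Lemma sharp_coalition i t :
  total2coalition adj (sharp_block (inl i)) (sharp_block (inr (i, t))).
Proof.
rewrite /total2coalition !sharp_block_not_total2dom sharp_pair_total2dom !andbT.
exact: sharp_block_disjoint.
Qed.

Lemma sharp_tc2_partition : 0 < m -> tc2_partition adj sharp_partition.
Proof.
move=> m_gt0; rewrite /tc2_partition sharp_partitionP.
apply/forall_inP=> _ /imsetP[[i|[j t]] _ ->]; apply/exists_inP.
- by exists (sharp_block (inr (i, Ordinal m_gt0))); rewrite ?imset_f ?sharp_coalition.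
- exists (sharp_block (inl j)); first exact: imset_f.
  exact/total2coalition_sym/sharp_coalition.
Qed.

Lemma deg_sharp_y j t : deg adj (inl (j, t)) = k.*2.
Proof.
pose x (a : 'I_k * bool) : V := inr (inl (a.1, j, a.2)).
rewrite /deg; have -> : nbhd adj (inl (j, t)) = x @: setT.
  apply/setP=> -[[j' t']|[[[i j'] s]|[l p]]]; rewrite inE /=.
  - by apply/esym/imsetP=> -[].
  - by apply/eqP/imsetP=> [->|[[i' s'] _ [_ -> _]]]; first exists (i, s).
  - by apply/esym/imsetP=> -[].
rewrite card_imset ?cardsT ?card_prod ?card_ord ?card_bool ?muln2 //.
by move=> [i s] [i' s'] [-> ->].
Qed.

Lemma sharp_deg_x_ge i j s : m <= deg adj (inr (inl (i, j, s))).
Proof.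
pose y (t : 'I_m) : V := inl (j, t).
have card_y : #|y @: setT| = m by rewrite card_imset ?cardsT ?card_ord // => t t' [->].
rewrite /deg -[leqLHS]card_y; apply/subset_leq_card/subsetP=> _ /imsetP[t _ ->].
by rewrite inE /= eqxx.
Qed.

Lemma sharp_deg_x_le i j s : deg adj (inr (inl (i, j, s))) <= m + k + k.-1.
Proof.
pose y (t : 'I_m) : V := inl (j, t).
pose f (p : 'I_3) (l : 'I_k) : V := inr (inr (l, p)).
have one_lt3 : 1 < 3 by [].
have sub : nbhd adj (inr (inl (i, j, s)))
    \subset y @: setT :|: f ord0 @: setT :|: f (Ordinal one_lt3) @: [set~ j].
  apply/subsetP=> -[[j' t]|[[[i' j'] s']|[l p]]]; rewrite !inE //=.
  - by move=> /eqP <-; rewrite (imset_f y).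
  - case/orP=> [/eqP p0|/andP[/eqP p1 neq_lj]].
      have -> : p = ord0 by apply: val_inj.
      by rewrite (imset_f (f ord0)) ?orbT.
    have -> : p = Ordinal one_lt3 by apply: val_inj.
    by rewrite (imset_f (f _)) ?orbT // !inE.
apply: leq_trans (subset_leq_card sub) _.
apply: leq_trans (leq_card_setU _ _) _.
apply: leq_add (leq_trans (leq_card_setU _ _) (leq_add _ _)) _.
all: by rewrite (leq_trans (leq_imset_card _ _)) ?cardsT ?cardsC1 ?card_ord.
Qed.

Lemma sharp_deg_f_ge l p : (k * 3).-1 <= deg adj (inr (inr (l, p))).
Proof.
pose f (a : 'I_k * 'I_3) : V := inr (inr a).
have card_f : #|f @: [set~ (l, p)]| = (k * 3).-1.
  by rewrite card_imset ?cardsC1 ?card_prod ?card_ord // => a b [].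
rewrite /deg -[leqLHS]card_f; apply/subset_leq_card/subsetP=> _ /imsetP[a + ->].
by rewrite !inE /= eq_sym.
Qed.

Lemma sharp_deg_f_le l p : deg adj (inr (inr (l, p))) <= k * k * 2 + k * 3.
Proof.
have sub : nbhd adj (inr (inr (l, p))) \subset [set inr a | a in predT].
  by apply/subsetP=> -[[j t]|a]; rewrite inE //= => _; apply: imset_f.
apply: leq_trans (subset_leq_card sub) (leq_trans (leq_imset_card _ _) _).
by rewrite card_sum !card_prod !card_ord card_bool.
Qed.

Lemma sharp_deg_ge x : 0 < k -> k.*2 <= m -> k.*2 <= deg adj x.
Proof.
move=> k_gt0 km; case: x => [[j t]|[[[i j] s]|[l p]]].
- by rewrite deg_sharp_y.
- exact: leq_trans km (sharp_deg_x_ge _ _ _).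
- by apply: leq_trans (sharp_deg_f_ge _ _); lia.
Qed.

Lemma sharp_deg_le x : k * k * 2 + k * 3 <= m -> deg adj x <= m + k + k.-1.
Proof.
move=> km; case: x => [[j t]|[[[i j] s]|[l p]]].
- by rewrite deg_sharp_y; lia.
- exact: sharp_deg_x_le.
- by apply: leq_trans (sharp_deg_f_le _ _) _; lia.
Qed.

Lemma sharp_connected : 0 < k -> connected_graph adj.
Proof.
move=> k_gt0; pose o : 'I_k := Ordinal k_gt0; pose z : V := inr (inr (o, ord0)).
have to_z x : connect adj x z.
  case: x => [[j t]|[[[i j] s]|a]]; last 2 first.
  - exact: connect1.
  - have [->|neq_az] := eqVneq a (o, ord0); first exact: connect0.
    by apply: connect1; case: a neq_az.
  have y_x : adj (inl (j, t)) (inr (inl (o, j, false))) by rewrite /= eqxx.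
  exact: connect_trans (connect1 y_x) (connect1 _).
move=> x y; apply: connect_trans (to_z x) _.
by rewrite (sym_connect_sym sharp_adj_sym).
Qed.

End Sharpness.

Lemma sharp_example k : 0 < k ->
  exists (T : finType) (e : rel T) (Delta : nat),
    simple_graph e /\ connected_graph e /\
    is_min_degree e k.*2 /\ is_max_degree e Delta /\
    4 * k - 2 <= Delta /\ TC2 e = k * (Delta - 2 * k + 1) + k.
Proof.
move=> k_gt0; pose m := k * k * 2 + k * 3; pose e := @sharp_adj k m.
have m_gt0 : 0 < m by lia.
pose o : 'I_k := Ordinal k_gt0; pose y : sharp_vertex k m := inl (o, Ordinal m_gt0).
pose Delta := \max_x deg e x.
have min_deg : is_min_degree e k.*2.
  by split; [exists y; apply: deg_sharp_y | move=> x; apply: sharp_deg_ge => //; lia].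
have max_deg : is_max_degree e Delta.
  split=> [|x]; last exact: leq_bigmax.
  have [x ->] : {x | Delta = deg e x} by apply: eq_bigmax; apply/card_gt0P; exists y.
  by exists x.
have m_le : m <= Delta := leq_trans (sharp_deg_x_ge _ o o false) (leq_bigmax _).
have le_m : Delta <= m + k + k.-1 by apply/bigmax_leqP=> x _; apply: sharp_deg_le.
have Delta_ge : 4 * k - 2 <= Delta by lia.
exists (sharp_vertex k m), e, Delta; do !split => //.
- exact: sharp_adj_sym.
- exact: sharp_adj_irr.
- exact: sharp_connected.
apply/eqP; rewrite eqn_leq.
have := TC2_le min_deg max_deg; rewrite doubleK uphalf_double => -> //=.
have : #|sharp_partition k m| <= TC2 e by apply/leq_bigmax_cond/sharp_tc2_partition.
rewrite card_sharp_partition; apply: leq_trans; rewrite addnC leq_add2l leq_mul2l; lia.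
Qed.

Theorem theorem3p9 :
  (forall (T : finType) (e : rel T) (delta Delta : nat),
      simple_graph e -> connected_graph e ->
      is_min_degree e delta -> is_max_degree e Delta ->
      2 <= delta -> 4 * delta./2 - 2 <= Delta ->
      TC2 e <= delta./2 * (Delta - 2 * delta./2 + 1) + uphalf delta)
  /\
  (forall delta : nat, 2 <= delta -> ~~ odd delta ->
     exists (T : finType) (e : rel T) (Delta : nat),
       simple_graph e /\ connected_graph e /\
       is_min_degree e delta /\ is_max_degree e Delta /\
       4 * delta./2 - 2 <= Delta /\
       TC2 e = delta./2 * (Delta - 2 * delta./2 + 1) + uphalf delta).
Proof.
split=> [T e delta Delta _ _ mindeg maxdeg _|delta delta_ge2 /negPf delta_even].
  exact: TC2_le.
move: delta_ge2; rewrite -(odd_double_half delta) delta_even add0n doubleK uphalf_double.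
by move=> k_gt0; apply: sharp_example; case: (delta./2) k_gt0.
Qed.
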